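(* Let $q$ be odd and let $U$ be an intersecting family of polynomials over $\mathbb{F}_q$ of degree at most $2$ with $|U|>\frac{q^2+2q-1}{2}$. Suppose $H\subseteq U$ has more than $\frac{q^2+q}{2}$ elements and there exist $\alpha,\beta\in\mathbb{F}_q$ with $h(\alpha)=\beta$ for all $h\in H$. Then $f(\alpha)=\beta$ for every $f\in U$.
   Context: A set of polynomials over $\mathbb{F}_q$ is intersecting if for any two members $f_1,f_2$ the graphs $\{(x,f_i(x)):x\in\mathbb{F}_q\}$ share at least one point. *)

From HB Require Import structures.
From mathcomp Require Import all_boot all_order all_algebra all_field.
From mathcomp Require Import finmap.
Set Implicit Arguments. Unset Strict Implicit. Unset Printing Implicit Defensive.
Import GRing.Theory.
Local Open Scope ring_scope.

Definition intersecting (F : finFieldType) (U : {fset {poly F}}) : Prop :=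
  forall f1 f2 : {poly F}, f1 \in U -> f2 \in U -> exists x : F, f1.[x] = f2.[x].

From HB Require Import structures.
From mathcomp Require Import all_boot all_order all_algebra all_field.
From mathcomp Require Import finmap.
From mathcomp Require Import zify ring.
Set Implicit Arguments.
Unset Strict Implicit.
Unset Printing Implicit Defensive.
Import GRing.Theory.
Local Open Scope ring_scope.

(* Suppose f in U has f(alpha) <> beta. For h in H, g = h - f has degree at
   most 2, the same value c = beta - f(alpha) <> 0 at alpha, and (as U is
   intersecting) a root x <> alpha. Writing g(alpha + s) = c + a s + b s^2,
   the number t = 1/(x - alpha) is a nonzero root of u^2 + (a/c) u + b/c, and
   g is determined by (a, b). So H injects into the monic quadratics with a
   nonzero root. Such a quadratic is determined by its root set
   {t, -a/c - t}, a set of size 1 or 2 other than {0}; hence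
   |H| <= q + C(q,2) - 1 < (q^2 + q)/2. *)

Section QuadraticTaylor.
Variable R : comNzRingType.
Implicit Types (p q : {poly R}) (a x : R).

Lemma horner_size3 p x :
  (size p <= 3)%N -> p.[x] = p`_0 + p`_1 * x + p`_2 * x ^+ 2.
Proof.
move=> p3; rewrite (horner_coef_wide x p3) !big_ord_recl big_ord0 /bump /=; ring.
Qed.

Lemma deriv_horner_size3 p x :
  (size p <= 3)%N -> p^`().[x] = p`_1 + p`_2 * x *+ 2.
Proof.
move=> p3; have d3 : (size p^`() <= 3)%N.
  exact: leq_trans (size_poly _ _) (leq_trans (leq_pred _) p3).
by rewrite horner_size3 // !coef_deriv (nth_default 0 p3); ring.
Qed.

Lemma taylor_size3 p a x : (size p <= 3)%N ->
  p.[x] = p.[a] + p^`().[a] * (x - a) + p`_2 * (x - a) ^+ 2.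
Proof. by move=> p3; rewrite deriv_horner_size3 // !horner_size3 //; ring. Qed.

Lemma poly_size3_eq p q a : (size p <= 3)%N -> (size q <= 3)%N ->
  p.[a] = q.[a] -> p^`().[a] = q^`().[a] -> p`_2 = q`_2 -> p = q.
Proof.
move=> p3 q3 e0 e1 e2.
have {e1} e1 : p`_1 = q`_1 by move: e1; rewrite !deriv_horner_size3 // e2 => /addIr.
have {e0} e0 : p`_0 = q`_0.
  by move: e0; rewrite !horner_size3 // e1 e2 => /addIr /addIr.
apply/polyP => -[|[|[|i]]] //.
by rewrite !nth_default // ?(leq_trans p3) ?(leq_trans q3).
Qed.

End QuadraticTaylor.

Lemma reciprocal_root_size3 (F : fieldType) (p : {poly F}) a x :
  (size p <= 3)%N -> p.[a] != 0 -> x != a -> p.[x] = 0 ->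
  (x - a)^-1 ^+ 2 + p^`().[a] / p.[a] * (x - a)^-1 + p`_2 / p.[a] = 0.
Proof.
move=> p3 pa_nz xa px; have xa_nz : x - a != 0 by rewrite subr_eq0.
have -> : (x - a)^-1 ^+ 2 + p^`().[a] / p.[a] * (x - a)^-1 + p`_2 / p.[a]
    = (p.[a] + p^`().[a] * (x - a) + p`_2 * (x - a) ^+ 2) / (p.[a] * (x - a) ^+ 2).
  by field; rewrite pa_nz xa_nz.
by rewrite -taylor_size3 // px mul0r.
Qed.

Lemma set2_sum_mul (R : finComNzRingType) (x1 x2 y1 y2 : R) :
  [set x1; x2] = [set y1; y2] -> x1 + x2 = y1 + y2 /\ x1 * x2 = y1 * y2.
Proof.
move/setP=> E.
have : x1 \in [set y1; y2] by rewrite -E !inE eqxx.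
have : x2 \in [set y1; y2] by rewrite -E !inE eqxx orbT.
have : y1 \in [set x1; x2] by rewrite E !inE eqxx.
have : y2 \in [set x1; x2] by rewrite E !inE eqxx orbT.
rewrite !inE => /orP[]/eqP e1 /orP[]/eqP e2 /orP[]/eqP e3 /orP[]/eqP e4.
all: by subst; split; ring.
Qed.

Lemma monic_quadratic_eq_of_root_set (R : finComNzRingType) (A B A' B' t t' : R) :
  t ^+ 2 + A * t + B = 0 -> t' ^+ 2 + A' * t' + B' = 0 ->
  [set t; - A - t] = [set t'; - A' - t'] -> A = A' /\ B = B'.
Proof.
have root_vieta (a b s : R) : s ^+ 2 + a * s + b = 0 ->
    s + (- a - s) = - a /\ s * (- a - s) = b.
  by move=> r; split; [ring | rewrite -[b]subr0 -r; ring].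
move=> /root_vieta[sA pB] /root_vieta[sA' pB'] /set2_sum_mul[].
by rewrite sA sA' pB pB' => /oppr_inj.
Qed.

Lemma card_small_sets (T : finType) :
  (#|[set S : {set T} | (0 < #|S| <= 2)%N]| <= #|T| + 'C(#|T|, 2))%N.
Proof.
rewrite -{1}(bin1 #|T|) -!card_draws.
apply: leq_trans (leq_card_setU _ _); apply/subset_leq_card/subsetP => S.
by rewrite !inE; case: #|S| => [|[|[|n]]].
Qed.

Definition monic_quadratics_with_nonzero_root (R : finComNzRingType) :
    {set R * R} :=
  [set AB | [exists t, (t != 0) && (t ^+ 2 + AB.1 * t + AB.2 == 0)]].

Lemma reciprocal_root_mem (F : finFieldType) (p : {poly F}) a x :
  (size p <= 3)%N -> p.[a] != 0 -> x != a -> p.[x] = 0 ->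
  (p^`().[a] / p.[a], p`_2 / p.[a]) \in monic_quadratics_with_nonzero_root F.
Proof.
move=> p3 pa_nz xa px; rewrite inE; apply/existsP; exists (x - a)^-1.
by rewrite invr_eq0 subr_eq0 xa /=; apply/eqP; apply: reciprocal_root_size3.
Qed.

Lemma card_monic_quadratics_with_nonzero_root (R : finComNzRingType) :
  (#|monic_quadratics_with_nonzero_root R| < #|R| + 'C(#|R|, 2))%N.
Proof.
set P := monic_quadratics_with_nonzero_root R.
pose root (AB : R * R) :=
  odflt 0 [pick t | (t != 0) && (t ^+ 2 + AB.1 * t + AB.2 == 0)].
have rootP AB : AB \in P ->
    root AB != 0 /\ root AB ^+ 2 + AB.1 * root AB + AB.2 = 0.
  rewrite inE /root => /existsP[t0 Ht0].
  by case: pickP => [t /andP[-> /eqP]|/(_ t0)/negbT/negP] //.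
pose code AB := [set root AB; - AB.1 - root AB].
have code_inj : {in P &, injective code}.
  move=> [A B] [A' B'] /rootP[_ /= rAB] /rootP[_ /= rAB'].
  by case/(monic_quadratic_eq_of_root_set rAB rAB') => -> ->.
have code_sub : code @: P \subset [set S : {set R} | (0 < #|S| <= 2)%N] :\ [set 0].
  apply/subsetP => _ /imsetP[AB /rootP[r_nz _] ->]; rewrite !inE cards2.
  apply/andP; split; last by case: (_ != _).
  by apply/negP => /eqP/setP/(_ (root AB)); rewrite !inE eqxx (negbTE r_nz).
rewrite -(card_in_imset code_inj); apply: leq_ltn_trans (subset_leq_card code_sub) _.
by have := card_small_sets R; rewrite (cardsD1 [set 0]) in_set cards1 add1n.
Qed.

Lemma leq_card_fset_in (K : choiceType) (T : finType) (A : {fset K})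
    (P : {set T}) (k : K -> T) :
  {in A &, injective k} -> {in A, forall x, k x \in P} -> (#|` A| <= #|P|)%N.
Proof.
move=> k_inj kP; rewrite cardE -(size_map k); apply: uniq_leq_size.
  by rewrite map_inj_in_uniq ?fset_uniq.
by move=> _ /mapP[x xA ->]; rewrite mem_enum kP.
Qed.

Local Open Scope fset_scope.

Theorem lemma7 (F : finFieldType) (U H : {fset {poly F}}) (alpha beta : F) :
  odd #|F| ->
  intersecting U ->
  (forall f : {poly F}, f \in U -> (size f <= 3)%N) ->
  (#|F| ^ 2 + 2 * #|F| - 1 < 2 * #|` U|)%N ->
  H `<=` U ->
  (#|F| ^ 2 + #|F| < 2 * #|` H|)%N ->
  (forall h : {poly F}, h \in H -> h.[alpha] = beta) ->
  forall f : {poly F}, f \in U -> f.[alpha] = beta.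
Proof.
move=> _ U_int U_deg _ HU H_card H_val f fU.
have [//|f_ne] := eqVneq f.[alpha] beta; exfalso.
pose c := beta - f.[alpha].
have c_nz : c != 0 by rewrite subr_eq0 eq_sym.
have hU h : h \in H -> h \in U by apply: (fsubsetP HU).
have g_deg h : h \in H -> (size (h - f)%R <= 3)%N.
  move=> hH; apply: leq_trans (size_polyD _ _) _.
  by rewrite geq_max size_polyN !U_deg // hU.
have g_alpha h : h \in H -> (h - f).[alpha] = c.
  by move=> hH; rewrite hornerD hornerN H_val.
pose k h := ((h - f)^`().[alpha] / c, (h - f)`_2 / c).
have k_inj : {in H &, injective k}.
  move=> h h' hH h'H [/(divIf c_nz) e1 /(divIf c_nz) e2]; apply: (addIr (- f)).
  by apply: (poly_size3_eq (a := alpha)); rewrite ?g_deg ?g_alpha.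
have k_root h : h \in H -> k h \in monic_quadratics_with_nonzero_root F.
  move=> hH; have [x hx] := U_int h f (hU h hH) fU.
  rewrite /k -(g_alpha h hH) (@reciprocal_root_mem _ _ _ x) ?g_deg ?g_alpha //.
    by apply: contra_neq f_ne => xa; rewrite -xa -hx xa H_val.
  by rewrite hornerD hornerN hx subrr.
have H_le := leq_card_fset_in k_inj k_root.
have P_lt := card_monic_quadratics_with_nonzero_root F.
have C_sq : (2 * 'C(#|F|, 2) + #|F| = #|F| ^ 2)%N.
  by rewrite -mul_bin_diag bin1; case: #|F| => [|n] //; rewrite -mulnSr.
move: H_card H_le P_lt C_sq.
(* [lia] would treat differently elaborated copies of these cardinals as
   distinct atoms. *)
set q := #|F|; set n := #|` H|; set m := #|monic_quadratics_with_nonzero_root F|.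
lia.
Qed.
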